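(* Let $G$ be a torsion-free group, $\mathbb{F}$ a field, $\alpha$ a zero divisor in $\mathbb{F}[G]$ with $|supp(\alpha)|=4$ and $|S_\alpha|=12$, and $\beta$ a non-zero element of $\mathbb{F}[G]$ with $\alpha\beta=0$. If the maximum degree of $Z(\alpha,\beta)$ is $5$, then the number of vertices of degree $5$ in $Z(\alpha,\beta)$ is a multiple of $6$.
   Context: $supp(\gamma)=\{x\in G:\gamma_x\ne0\}$; $S_\alpha=\{h^{-1}h':h\ne h',\ h,h'\in supp(\alpha)\}$. The zero-divisor graph $Z(\alpha,\beta)$ is the multigraph with vertex set $supp(\beta)$ whose edges are the sets $\{(h,h',g,g'),(h',h,g',g)\}$ with $h,h'\in supp(\alpha)$, $g,g'\in supp(\beta)$, $g\ne g'$, $hg=h'g'$, each joining $g$ and $g'$; the degree of a vertex is the number of incident edges. *)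

From HB Require Import structures.
From mathcomp Require Import all_boot all_order all_algebra.
From mathcomp Require Import finmap.
Set Implicit Arguments.
Unset Strict Implicit.
Unset Printing Implicit Defensive.
Import GRing.Theory.
Local Open Scope fset_scope.

(* Elements of the group algebra F[G] are finitely supported functions
   G -> F, i.e. {fsfun G -> F with 0}. G is an arbitrary (possibly infinite)
   group: a MathComp [groupType] (boot/monoid.v). *)

Section GroupAlgebra.
Variables (G : groupType) (F : fieldType).

Definition torsion_free : Prop :=
  forall (x : G) (n : nat), (0 < n)%N -> (x ^+ n)%g = 1%g -> x = 1%g.

Definition supp (a : {fsfun G -> F with 0%R}) : {fset G} := finsupp a.

(* coefficient of x in the product a * b in F[G]:
   (a b)_x = sum_{h g = x} a_h b_g = sum_{h in supp a} a_h b_{h^-1 x} *)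
Definition galg_mul_coef (a b : {fsfun G -> F with 0%R}) (x : G) : F :=
  (\sum_(h <- supp a) a h * b ((h^-1) * x)%g)%R.

Definition galg_mul_zero (a b : {fsfun G -> F with 0%R}) : Prop :=
  forall x : G, galg_mul_coef a b x = 0%R.

Definition zero_divisor (a : {fsfun G -> F with 0%R}) : Prop :=
  a != [fsfun] /\ exists c : {fsfun G -> F with 0%R}, c != [fsfun] /\ galg_mul_zero a c.

Definition S_set (a : {fsfun G -> F with 0%R}) : {fset G} :=
  [fset (h^-1 * h')%g | h in supp a, h' in supp a & h != h'].

(* quadruples (h, h', g, g') written (((h, h'), g), g') *)
Definition quad := (G * G * G * G)%type.

Definition quad_swap (q : quad) : quad :=
  (q.1.1.2, q.1.1.1, q.2, q.1.2).

Definition Z_quads (a b : {fsfun G -> F with 0%R}) : {fset quad} :=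
  [fset q in ((supp a `*` supp a) `*` supp b) `*` supp b
     | (q.1.2 != q.2) && ((q.1.1.1 * q.1.2)%g == (q.1.1.2 * q.2)%g)].

Definition Z_edges (a b : {fsfun G -> F with 0%R}) : {fset {fset quad}} :=
  [fset [fset q; quad_swap q] | q in Z_quads a b].

(* the edge {(h,h',g,g'),(h',h,g',g)} joins g and g' *)
Definition edge_ends (e : {fset quad}) : {fset G} := [fset q.1.2 | q in e].

Definition Z_deg (a b : {fsfun G -> F with 0%R}) (v : G) : nat :=
  #|` [fset e in Z_edges a b | v \in edge_ends e] |.

(* vertex set of Z(a,b) is supp b *)
Definition Z_maxdeg (a b : {fsfun G -> F with 0%R}) : nat :=
  \max_(v <- supp b) Z_deg a b v.

End GroupAlgebra.

From HB Require Import structures.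
From mathcomp Require Import all_boot all_order all_algebra.
From mathcomp Require Import finmap.
From mathcomp Require Import zify.
Set Implicit Arguments.
Unset Strict Implicit.
Local Open Scope fset_scope.
Local Open Scope nat_scope.

(* Let c(x) count the factorisations x = h g with h in supp alpha and g in
   supp beta.  As (alpha beta)_x = 0, c(x) is never 1, so c >= 2 on the product
   set.  A vertex v has degree sum_h (c(hv) - 1) >= 4, so maximum degree 5
   forces c(x) in {2, 3} and every degree in {4, 5}.  Double counting gives
   sum_v (deg v + 4) = sum_x c(x)^2 and sum_x c(x) = 4 |supp beta|; since
   c^2 = 5c - 6 on {2, 3}, the number of degree-5 vertices is
   12 |supp beta| - 6 |(supp alpha)(supp beta)|. *)

Lemma mulVmul_eq (G : groupType) (h h' v : G) :
  ((h^-1 * (h' * v))%g == v) = (h' == h).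
Proof. by rewrite -[LHS](inj_eq (mulgI h)) mulVKg (inj_eq (mulIg v)). Qed.

Section FactorCount.
Variables (G : groupType) (A B : {fset G}).

Definition fset_mul : {fset G} := [fset (h * g)%g | h in A, g in B].

Definition factor_count (x : G) : nat := \sum_(h <- A) ((h^-1 * x)%g \in B : nat).

Lemma factor_count_gt0 h g : h \in A -> g \in B -> 0 < factor_count (h * g).
Proof.
by move=> hA gB; rewrite /factor_count (big_fsetD1 h) //= mulKg gB.
Qed.

Lemma sum_mul_factor_count (f : G -> nat) :
  \sum_(h <- A) \sum_(g <- B) f (h * g)%g =
  \sum_(x <- fset_mul) factor_count x * f x.
Proof.
under [RHS]eq_bigr => x _ do rewrite /factor_count big_distrl /=.
rewrite [RHS]exchange_big /=; apply: eq_big_seq => h hA.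
have -> : \sum_(g <- B) f (h * g)%g = \sum_(x <- [fset (h * g)%g | g in B]) f x.
  by rewrite big_imfset //= => ? ? _ _; apply: mulgI.
under [RHS]eq_bigr => x _ do rewrite mulnbl.
rewrite -big_mkcond /= [RHS]big_fset_condE; apply: eq_fbigl => x.
rewrite !inE /=; apply/imfsetP/andP => [[g /= gB ->] | [_ xB]].
  by rewrite mulKg gB; split=> //; apply/imfset2P; exists h => //; exists g.
by exists (h^-1 * x)%g => //; rewrite mulVKg.
Qed.

Lemma sum_factor_count : \sum_(x <- fset_mul) factor_count x = #|` A| * #|` B|.
Proof.
under eq_bigr => x _ do rewrite -[factor_count x]muln1.
rewrite -(sum_mul_factor_count (fun=> 1)) !card_fset_sum1 big_distrl /=.
by apply: eq_bigr => h _; rewrite mul1n.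
Qed.

End FactorCount.

Section ZeroDivisorGraph.
Variables (G : groupType) (F : fieldType) (a b : {fsfun G -> F with 0%R}).
Local Notation A := (supp a).
Local Notation B := (supp b).

Lemma factor_count_neq1 x : galg_mul_zero a b -> factor_count A B x != 1.
Proof.
move=> ab0; apply/negP=> /eqP c1.
have [h hA hxB] : exists2 h, h \in A & (h^-1 * x)%g \in B.
  apply/hasP; apply: contra_eqT c1 => /hasPn noh.
  by rewrite /factor_count big1_seq // => h /andP[_ /noh /negbTE ->].
have others0 h' : h' \in A `\ h -> (h'^-1 * x)%g \notin B.
  move=> h'Ah; apply/negP => h'xB.
  move: c1; rewrite /factor_count (big_fsetD1 h) //= hxB.
  by rewrite (big_fsetD1 h') //= h'xB.
have := ab0 x; rewrite /galg_mul_coef (big_fsetD1 h) //= big1_fset ?GRing.addr0.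
  apply/eqP; rewrite GRing.mulf_neq0 //.
  - by move: hA; rewrite /supp mem_finsupp.
  - by move: hxB; rewrite /supp mem_finsupp.
by move=> h' h'Ah _; rewrite (fsfun_dflt (others0 h' h'Ah)) GRing.mulr0.
Qed.

Definition Z_pair_quad (v : G) (p : G * G) : quad G :=
  (p.1, p.2, v, (p.2^-1 * (p.1 * v))%g).

Definition Z_pair_edge (v : G) (p : G * G) : {fset quad G} :=
  [fset Z_pair_quad v p; quad_swap (Z_pair_quad v p)].

Definition Z_pairs (v : G) : {fset G * G} :=
  [fset p in A `*` A | (p.1 != p.2) && ((p.2^-1 * (p.1 * v))%g \in B)].

Lemma Z_pair_edge_inj v : {in Z_pairs v &, injective (Z_pair_edge v)}.
Proof.
move=> [h1 h1'] [h2 h2'] _; rewrite !inE /= => /andP[_ /andP[h2h2' _]] e12.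
have : Z_pair_quad v (h1, h1') \in Z_pair_edge v (h2, h2').
  by rewrite -e12 !inE eqxx.
rewrite !inE => /orP[/eqP[-> ->] // | /eqP[_ _ /esym/eqP]].
by rewrite mulVmul_eq (negbTE h2h2').
Qed.

Lemma Z_incident_edgesE v : v \in B ->
  [fset e in Z_edges a b | v \in edge_ends e] = Z_pair_edge v @` Z_pairs v.
Proof.
move=> vB; apply/fsetP => e; rewrite inE; apply/andP/imfsetP => /=.
- case=> /imfsetP[[[[h h'] g] g'] qZ ->] /imfsetP[q qe ->] /=.
  move: qZ; rewrite !inE /=.
  case/and3P=> [/andP[/andP[/andP[hA h'A] gB] g'B] gg' /eqP hg].
  have eg' : g' = (h'^-1 * (h * g))%g by rewrite hg mulKg.
  have eg : g = (h^-1 * (h' * g'))%g by rewrite -hg mulKg.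
  move: qe; rewrite !inE => /orP[] /eqP -> /=.
  + exists (h, h'); last by rewrite /Z_pair_edge /Z_pair_quad /= -eg'.
    rewrite !inE /= hA h'A -eg' g'B /= andbT.
    by apply: contra gg' => /eqP hh'; rewrite eg' hh' mulKg.
  + exists (h', h); last by rewrite /Z_pair_edge /Z_pair_quad /= -eg fsetUC.
    rewrite !inE /= hA h'A -eg gB /= andbT.
    by apply: contra gg' => /eqP hh'; rewrite eg hh' mulKg.
- case=> p pZ ->; move: pZ; rewrite !inE => /andP[/andP[p1A p2A] /andP[p12 pvB]].
  split; apply/imfsetP; exists (Z_pair_quad v p); rewrite ?inE ?eqxx //=.
  by rewrite p1A p2A vB pvB mulVKg eqxx andbT eq_sym mulVmul_eq p12.
Qed.

Lemma Z_degE v : v \in B -> Z_deg a b v = #|` Z_pairs v|.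
Proof.
move=> vB; rewrite /Z_deg Z_incident_edgesE // card_in_imfset //=.
exact: Z_pair_edge_inj.
Qed.

Lemma Z_deg_addn_card v : v \in B ->
  Z_deg a b v + #|` A| = \sum_(h <- A) factor_count A B (h * v).
Proof.
move=> vB; rewrite Z_degE // !card_fset_sum1 -big_fset_condE.
rewrite big_mkcond big_imfset2 /=; last by move=> [? ?] [? ?] _ _ /= [-> ->].
rewrite -big_split /=; apply: eq_big_seq => h hA.
rewrite /factor_count [RHS](big_fsetD1 h) //= (big_fsetD1 h) //= mulKg vB eqxx.
rewrite add0n addn1; congr _.+1; apply: eq_fbigr => h'.
by rewrite !inE => /andP[h'h _] _; rewrite eq_sym h'h.
Qed.

Lemma sum_Z_deg :
  \sum_(v <- B) (Z_deg a b v + #|` A|) =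
  \sum_(x <- fset_mul A B) factor_count A B x ^ 2.
Proof.
rewrite (eq_big_seq _ (@Z_deg_addn_card)) exchange_big /=.
exact: sum_mul_factor_count.
Qed.

Hypothesis ab0 : galg_mul_zero a b.

Lemma factor_count_ge2 h g : h \in A -> g \in B -> 1 < factor_count A B (h * g).
Proof.
move=> hA gB; rewrite ltn_neqAle eq_sym factor_count_neq1 //.
exact: factor_count_gt0.
Qed.

Lemma Z_deg_excessE v : v \in B ->
  Z_deg a b v = \sum_(h <- A) (factor_count A B (h * v) - 2) + #|` A|.
Proof.
move=> vB; apply/(@addIn #|` A|); rewrite Z_deg_addn_card // -addnA addnn -muln2.
rewrite card_fset_sum1 big_distrl -big_split /=; apply: eq_big_seq => h hA.
by rewrite mul1n subnK // factor_count_ge2.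
Qed.

Lemma card_supp_le_Z_deg v : v \in B -> #|` A| <= Z_deg a b v.
Proof. by move=> vB; rewrite Z_deg_excessE // leq_addl. Qed.

Lemma factor_count_le_Z_deg h v : h \in A -> v \in B ->
  factor_count A B (h * v) - 2 + #|` A| <= Z_deg a b v.
Proof.
by move=> hA vB; rewrite Z_deg_excessE // leq_add2r (big_fsetD1 h) //= leq_addr.
Qed.

End ZeroDivisorGraph.

Theorem mainTheorem12 (G : groupType) (F : fieldType)
    (alpha beta : {fsfun G -> F with 0%R}) :
  torsion_free G ->
  zero_divisor alpha ->
  #|` supp alpha| = 4 ->
  #|` S_set alpha| = 12 ->
  beta != [fsfun] ->
  galg_mul_zero alpha beta ->
  Z_maxdeg alpha beta = 5 ->
  (6 %| #|` [fset v in supp beta | Z_deg alpha beta v == 5] |)%N.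
Proof.
move=> _ _ A4 _ _ ab0 maxdeg5.
set A := supp alpha in A4 *; set B := supp beta; set d := Z_deg alpha beta.
set c := factor_count A B; set X := fset_mul A B.
have d_le5 v : v \in B -> d v <= 5.
  by move=> vB; rewrite -maxdeg5; apply: (leq_bigmax_seq (P := xpredT)).
have c_sq x : x \in X -> c x ^ 2 + 6 = 5 * c x.
  case/imfset2P=> h hA [g gB ->].
  have := factor_count_ge2 ab0 hA gB; have := factor_count_le_Z_deg ab0 hA gB.
  rewrite -/A -/B -/c -/d A4; have := d_le5 g gB; nia.
have sum_d : \sum_(v <- B) (d v + 4) = 8 * #|` B| + #|` [fset v in B | d v == 5]|.
  rewrite [in RHS]card_fset_sum1 card_fset_sum1 -big_fset_condE big_distrr.
  rewrite [X in _ + X]big_mkcond -big_split /=; apply: eq_big_seq => v vB.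
  have := card_supp_le_Z_deg ab0 vB; have := d_le5 v vB.
  by rewrite -/A -/d A4; case: eqP; lia.
have sum_c : \sum_(x <- X) c x ^ 2 + 6 * #|` X| = 20 * #|` B|.
  rewrite card_fset_sum1 big_distrr -big_split /= (eq_big_seq _ c_sq).
  by rewrite -big_distrr sum_factor_count A4 /= mulnA.
move: sum_c; rewrite -A4 -sum_Z_deg A4 -/d sum_d => sum_B.
by apply/dvdnP; exists (2 * #|` B| - #|` X|); lia.
Qed.
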